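(* Let $\Gamma=(V,E)$ be a finite connected undirected graph and let $(u_{ij})$ be the generators of $C(G_{aut}^+(\Gamma))$. Let $i,j,k,l\in V$ with $d(i,k)=d(j,l)=m$. Let $q\in V$ with $d(j,q)=s$ and $d(q,l)=t$, and suppose that $u_{kl}u_{aq}=u_{aq}u_{kl}$ for all $a\in V$ with $d(a,k)=t$. Then $$u_{ij}u_{kl}=u_{ij}u_{kl}\sum_{p\in V:\ d(l,p)=m,\ d(p,q)=s}u_{ip}.$$ In particular, if $m=2$ and $G_{aut}^+(\Gamma)=G_{aut}^*(\Gamma)$, then for any common neighbor $q$ of $j$ and $l$, $$u_{ij}u_{kl}=u_{ij}u_{kl}\sum_{p\in V:\ d(l,p)=2,\ (p,q)\in E}u_{ip}.$$
   Context: $\Gamma$ is a finite simple connected undirected graph on $V=\{1,\dots,n\}$, $d$ the graph distance. $C(G_{aut}^+(\Gamma))$ is the universal unital $C^*$-algebra generated by $u_{ij}$, $1\le i,j\le n$, with relations: (R1) $u_{ij}=u_{ij}^*=u_{ij}^2$; (R2) $\sum_{l} u_{il}=1=\sum_{l} u_{li}$ for all $i$; (R3) $u_{ij}u_{kl}=u_{kl}u_{ij}=0$ whenever exactly one of $(i,k)\in E$, $(j,l)\in E$ holds. ''$G_{aut}^+(\Gamma)=G_{aut}^*(\Gamma)$'' means $u_{ij}u_{kl}=u_{kl}u_{ij}$ for all $(i,k)\in E$, $(j,l)\in E$. *)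

From HB Require Import structures.
From mathcomp Require Import all_boot all_order all_algebra.
Set Implicit Arguments. Unset Strict Implicit. Unset Printing Implicit Defensive.
Import GRing.Theory.
Local Open Scope ring_scope.

Definition simple_graph (T : finType) (e : rel T) : Prop :=
  symmetric e /\ irreflexive e.

Definition connected_graph (T : finType) (e : rel T) : Prop :=
  forall x y : T, connect e x y.

Fixpoint walk (T : finType) (e : rel T) (n : nat) (x y : T) : bool :=
  match n with
  | 0 => x == y
  | n'.+1 => [exists z, e x z && walk e n' z y]
  end.

(* Graph distance: least n with a walk of length n from x to y
   (for a connected graph this is < #|T|, so searching 0..#|T|-1 suffices). *)
Definition gdist (T : finType) (e : rel T) (x y : T) : nat :=
  find (fun n => walk e n x y) (iota 0 #|T|).

(* Ring with involution satisfying the C*-positivity property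
   (sum of x_i^* x_i = 0 forces all x_i = 0); every C*-algebra is one. *)
Definition cstar_like (R : nzRingType) (star : R -> R) : Prop :=
  [/\ forall x, star (star x) = x,
      forall x y, star (x + y) = star x + star y,
      forall x y, star (x * y) = star y * star x,
      star 1 = 1
    & forall s : seq R, \sum_(x <- s) star x * x = 0 -> forall x, x \in s -> x = 0].

(* u satisfies the defining relations (R1)-(R3) of C(G_aut^+(Gamma)). *)
Definition qaut_rel (T : finType) (e : rel T) (R : nzRingType) (star : R -> R)
    (u : T -> T -> R) : Prop :=
  [/\ forall i j, star (u i j) = u i j /\ u i j * u i j = u i j,
      forall i, \sum_(l : T) u i l = 1 /\ \sum_(l : T) u l i = 1
    & forall i j k l, e i k != e j l -> u i j * u k l = 0 /\ u k l * u i j = 0].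

(* G_aut^+(Gamma) = G_aut^*(Gamma) *)
Definition aut_star_rel (T : finType) (e : rel T) (R : nzRingType) (u : T -> T -> R) : Prop :=
  forall i j k l, e i k -> e j l -> u i j * u k l = u k l * u i j.

(* Then, for self-adjoint idempotents
   summing to 1 in a C*-like ring, positivity forces pairwise orthogonality;
   applied to the rows of u this gives u_ij u_il = 0 for j <> l.  An
   induction on d(i,k), inserting the row sum of a neighbour of k, extends
   this to the key fact that quantum automorphisms preserve distances:
   u_ij u_kl = 0 whenever d(i,k) <> d(j,l).  The theorem follows by expanding
   1 = sum_p u_ip: a term with d(l,p) <> m dies by distance preservation, and
   a term with d(p,q) <> s dies after inserting sum_a u_aq and using the
   commutation hypothesis ([qaut_mul_vanish]).  The second statement is the
   specialisation m = 2, s = t = 1 under G_aut^+ = G_aut^*.  The hypothesis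
   d(j,l) = m turns out to be superfluous and is ignored. *)
From HB Require Import structures.
From mathcomp Require Import all_boot all_order all_algebra.
From mathcomp Require Import zify.
Set Implicit Arguments. Unset Strict Implicit.
Import GRing.Theory.
Local Open Scope ring_scope.

Section GraphDistance.

Variables (T : finType) (e : rel T).

Lemma walk_rcons n x y z : walk e n x y -> e y z -> walk e n.+1 x z.
Proof.
elim: n x => [|n IH] x /=.
  by move=> /eqP -> eyz; apply/existsP; exists z; rewrite eyz eqxx.
move=> /existsP [w /andP [exw hw]] eyz; apply/existsP; exists w.
by rewrite exw; apply: IH hw eyz.
Qed.

Lemma walk_last n x z : walk e n.+1 x z -> exists2 y, walk e n x y & e y z.
Proof.
elim: n x => [|n IH] x /=.
  by move=> /existsP [w /andP [exw /eqP <-]]; exists x.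
move=> /existsP [w /andP [exw hw]]; have [y hy eyz] := IH w hw.
by exists y => //; apply/existsP; exists w; rewrite exw.
Qed.

Lemma walk_sym : symmetric e -> forall n x y, walk e n x y -> walk e n y x.
Proof.
move=> e_sym; elim=> [|n IH] x y /=; first by rewrite eq_sym.
move=> /existsP [z /andP [exz hz]].
by apply: walk_rcons (IH _ _ hz) _; rewrite e_sym.
Qed.

Lemma walk_path p x : path e x p -> walk e (size p) x (last x p).
Proof.
elim: p x => [|y p IH] x /=; first by rewrite eqxx.
by move=> /andP [exy hp]; apply/existsP; exists y; rewrite exy IH.
Qed.

Hypothesis e_conn : connected_graph e.

(* In a connected graph every two vertices are joined by a walk of length
   < #|T| (a duplicate-free path), so the search defining [gdist] succeeds. *)
Lemma has_short_walk x y : has (fun n => walk e n x y) (iota 0 #|T|).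
Proof.
have /connectP [p hp ->] := e_conn x y.
have [p' hp' uniq_p' _] := shortenP hp.
apply/hasP; exists (size p'); last exact: walk_path.
have := max_card (mem (x :: p')); rewrite (card_uniqP uniq_p') mem_iota /=.
lia.
Qed.

Lemma gdist_walk x y : walk e (gdist e x y) x y.
Proof.
have hw := has_short_walk x y; have := nth_find 0%N hw.
by rewrite has_find size_iota in hw; rewrite nth_iota.
Qed.

Lemma gdist_min n x y : walk e n x y -> (gdist e x y <= n)%N.
Proof.
move=> hw; rewrite leqNgt; apply/negP => lt_n_d.
have := has_short_walk x y; rewrite has_find size_iota => d_lt.
have := before_find 0%N lt_n_d.
rewrite nth_iota; last by move: lt_n_d; rewrite /gdist; lia.
by rewrite hw.
Qed.

Lemma gdistC : symmetric e -> forall x y, gdist e x y = gdist e y x.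
Proof.
move=> e_sym x y; apply/eqP; rewrite eqn_leq.
by rewrite !gdist_min // walk_sym // gdist_walk.
Qed.

Lemma gdist_eq0 x y : gdist e x y = 0%N -> x = y.
Proof. by move=> d0; have := gdist_walk x y; rewrite d0 => /eqP. Qed.

Lemma gdistxx x : gdist e x x = 0%N.
Proof. by apply/eqP; rewrite -leqn0 gdist_min //= eqxx. Qed.

Lemma gdist_edge x y z : e y z -> (gdist e x z <= (gdist e x y).+1)%N.
Proof.
by move=> eyz; apply: gdist_min; apply: walk_rcons eyz; apply: gdist_walk.
Qed.

Lemma gdist_pred x z n :
  gdist e x z = n.+1 -> exists2 y, e y z & gdist e x y = n.
Proof.
move=> dxz; have := gdist_walk x z; rewrite dxz => /walk_last [y hy eyz].
exists y => //; have := gdist_min hy; have := gdist_edge x eyz; lia.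
Qed.

Lemma gdist_eq1 : irreflexive e -> forall x y, (gdist e x y == 1%N) = e x y.
Proof.
move=> e_irr x y; apply/eqP/idP => [d1|exy].
  have := gdist_walk x y; rewrite d1 => /existsP [z /andP [exz /eqP <-]].
  exact: exz.
have : (gdist e x y <= 1)%N.
  by apply: gdist_min; apply/existsP; exists y; rewrite exy eqxx.
case: (gdist e x y =P 0%N) => [/gdist_eq0 eq_xy|]; last by lia.
by move: exy; rewrite eq_xy e_irr.
Qed.

End GraphDistance.

Section Projections.

Variables (R : nzRingType) (star : R -> R).
Hypothesis star_cstar : cstar_like star.

(* Self-adjoint idempotents summing to 1 are pairwise orthogonal: expanding
   p_j = p_j (sum_l p_l) p_j gives sum_(l <> j) (p_l p_j)^* (p_l p_j) = 0. *)
Lemma partition_orth (I : finType) (p : I -> R) :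
    (forall l, star (p l) = p l /\ p l * p l = p l) -> \sum_l p l = 1 ->
  forall l j, l != j -> p l * p j = 0.
Proof.
move=> proj_p sum_p l j neq_lj.
have [_ _ star_mul _ star_pos] := star_cstar.
have sandwich : \sum_(l' | l' != j) p j * p l' * p j = 0.
  have idem_j := proj2 (proj_p j).
  have expand : p j = p j + \sum_(l' | l' != j) p j * p l' * p j.
    rewrite -[LHS]idem_j -[X in X * _ = _]mulr1 -sum_p mulr_sumr mulr_suml.
    by rewrite (bigD1 j) //= !idem_j.
  by apply: (@addrI _ (p j)); rewrite addr0 -expand.
apply: (star_pos [seq p l' * p j | l' <- [seq l' <- index_enum I | l' != j]]).
  rewrite big_map big_filter -[RHS]sandwich; apply: eq_bigr => l' _.
  rewrite star_mul (proj1 (proj_p j)) (proj1 (proj_p l')) !mulrA.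
  by rewrite -(mulrA (p j)) (proj2 (proj_p l')).
by apply: map_f; rewrite mem_filter neq_lj mem_index_enum.
Qed.

End Projections.

Section QuantumAutomorphisms.

Variables (T : finType) (e : rel T) (R : nzRingType) (star : R -> R).
Hypotheses (e_simple : simple_graph e) (e_conn : connected_graph e).
Hypothesis star_cstar : cstar_like star.

Lemma qaut_rel_tr u : qaut_rel e star u -> qaut_rel e star (fun i j => u j i).
Proof.
case=> proj_u sum_u adj_u; split=> [i j|i|i j k l neq_e]; first exact: proj_u.
  by case: (sum_u i).
by apply: adj_u; rewrite eq_sym.
Qed.

Lemma qaut_row_orth u : qaut_rel e star u ->
  forall i j l, j != l -> u i j * u i l = 0.
Proof.
case=> proj_u sum_u _ i; apply: (partition_orth star_cstar) => [l|].
  exact: proj_u.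
exact: (proj1 (sum_u i)).
Qed.

(* Distances can only be preserved, first in the direction d(i,k) < d(j,l):
   by induction on d(i,k), inserting 1 = sum_b u_ab for a neighbour a of k
   that is closer to i; then b must neighbour l (R3), hence be far from j. *)
Lemma qaut_dist_lt u : qaut_rel e star u ->
  forall n i j k l,
    gdist e i k = n -> (n < gdist e j l)%N -> u i j * u k l = 0.
Proof.
move=> u_qaut; have [_ sum_u adj_u] := u_qaut.
elim=> [|n IH] i j k l dik ltd.
  have eq_ik := gdist_eq0 e_conn dik; subst k.
  apply: (qaut_row_orth u_qaut); apply: contraTneq ltd => <-.
  by rewrite gdistxx.
have [a eak dia] := gdist_pred e_conn dik.
rewrite -[u i j]mulr1 -(proj1 (sum_u a)) mulr_sumr mulr_suml big1 // => b _.
have [ebl|nebl] := boolP (e b l); last first.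
  by rewrite -mulrA (proj1 (adj_u a b k l _)) ?mulr0 // eak (negbTE nebl).
have djb := gdist_edge e_conn j ebl.
by rewrite (IH i j a b dia) ?mul0r //; lia.
Qed.

Lemma qaut_dist_ne u : qaut_rel e star u ->
  forall i j k l, gdist e i k != gdist e j l -> u i j * u k l = 0.
Proof.
move=> u_qaut i j k l; case: ltngtP => // ltd _.
  exact: (qaut_dist_lt u_qaut erefl ltd).
exact: (qaut_dist_lt (qaut_rel_tr u_qaut) erefl ltd).
Qed.

(* If u_kl commutes with every u_aq, d(a,k) = d(q,l), then u_ij u_kl u_ip
   vanishes unless d(p,q) = d(j,q): insert 1 = sum_a u_aq between u_kl and
   u_ip; a surviving term needs d(a,i) = d(q,p) and d(k,a) = d(l,q), and
   then commuting u_aq to the left meets u_ij with d(i,a) <> d(j,q). *)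
Lemma qaut_mul_vanish u : qaut_rel e star u ->
  forall i j k l p q,
    (forall a, gdist e a k = gdist e q l -> u k l * u a q = u a q * u k l) ->
    gdist e p q != gdist e j q -> u i j * u k l * u i p = 0.
Proof.
move=> u_qaut i j k l p q comm_kl neq_pj.
have [_ sum_u _] := u_qaut; have dist_u := qaut_dist_ne u_qaut.
have dC := gdistC e_conn e_simple.1.
rewrite -[u i j * u k l]mulr1 -(proj2 (sum_u q)) mulr_sumr mulr_suml.
apply: big1 => a _.
have [dai|ndai] := eqVneq (gdist e a i) (gdist e q p); last first.
  by rewrite -mulrA (dist_u a q i p) ?mulr0.
have [dka|ndka] := eqVneq (gdist e k a) (gdist e l q); last first.
  by rewrite -(mulrA (u i j)) (dist_u k l a q) ?mulr0 ?mul0r.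
rewrite -(mulrA (u i j)) comm_kl; last by rewrite dC dka dC.
by rewrite mulrA (dist_u i j a q) ?mul0r // dC dai dC.
Qed.

(* First statement of Lemma 3.6. *)
Lemma qaut_mul_restrict u : qaut_rel e star u ->
  forall (i j k l q : T) (m s t : nat),
    gdist e i k = m -> gdist e j q = s -> gdist e q l = t ->
    (forall a : T, gdist e a k = t -> u k l * u a q = u a q * u k l) ->
    u i j * u k l
      = u i j * u k l
        * \sum_(p : T | (gdist e l p == m) && (gdist e p q == s)) u i p.
Proof.
move=> u_qaut i j k l q m s t dik djq dql comm_kl.
have [_ sum_u _] := u_qaut; have dist_u := qaut_dist_ne u_qaut.
have row_i : u i j * u k l = u i j * u k l * \sum_p u i p.
  by rewrite (proj1 (sum_u i)) mulr1.
rewrite {1}row_i.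
rewrite [in LHS](bigID (fun p => (gdist e l p == m) && (gdist e p q == s))) /=.
rewrite mulrDr [X in _ + X](_ : _ = 0) ?addr0 // mulr_sumr; apply: big1 => p.
have [dlp|ndlp] := eqVneq (gdist e l p) m => /= [ndpq|_]; last first.
  rewrite -mulrA (dist_u k l i p) ?mulr0 //.
  by rewrite (gdistC e_conn e_simple.1) dik eq_sym.
apply: (@qaut_mul_vanish u u_qaut i j k l p q) => [a dak|]; last by rewrite djq.
by apply: comm_kl; rewrite dak.
Qed.

Lemma qaut_mul_restrict2 u : qaut_rel e star u -> aut_star_rel e u ->
  forall (i j k l q : T),
    gdist e i k = 2%N -> e j q -> e q l ->
    u i j * u k l
      = u i j * u k l * \sum_(p : T | (gdist e l p == 2%N) && e p q) u i p.
Proof.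
move=> u_qaut u_star i j k l q dik ejq eql.
have [e_sym e_irr] := e_simple; have d1 := gdist_eq1 e_conn e_irr.
have djq : gdist e j q = 1%N by apply/eqP; rewrite d1.
have dql : gdist e q l = 1%N by apply/eqP; rewrite d1.
rewrite {1}(@qaut_mul_restrict u u_qaut i j k l q 2 1 1 dik djq dql).
  by congr (_ * _); apply: eq_bigl => p; rewrite d1.
by move=> a /eqP; rewrite d1 => eak; apply: u_star; rewrite e_sym.
Qed.

End QuantumAutomorphisms.

Unset Implicit Arguments.

Theorem lemma3p6 (T : finType) (e : rel T) (R : nzRingType) (star : R -> R)
    (u : T -> T -> R) :
  simple_graph e -> connected_graph e -> cstar_like star -> qaut_rel e star u ->
  (forall (i j k l q : T) (m s t : nat),
     gdist e i k = m -> gdist e j l = m -> gdist e j q = s -> gdist e q l = t ->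
     (forall a : T, gdist e a k = t -> u k l * u a q = u a q * u k l) ->
     u i j * u k l
       = u i j * u k l * \sum_(p : T | (gdist e l p == m) && (gdist e p q == s)) u i p)
  /\
  (aut_star_rel e u ->
   forall (i j k l q : T),
     gdist e i k = 2%N -> gdist e j l = 2%N -> e j q -> e q l ->
     u i j * u k l
       = u i j * u k l * \sum_(p : T | (gdist e l p == 2%N) && e p q) u i p).
Proof.
move=> e_simple e_conn star_cstar u_qaut; split.
  move=> i j k l q m s t dik _.
  exact: (@qaut_mul_restrict T e R star e_simple e_conn star_cstar u u_qaut
            i j k l q m s t dik).
move=> u_star i j k l q dik _.
exact: (@qaut_mul_restrict2 T e R star e_simple e_conn star_cstar u u_qaut
          u_star i j k l q dik).
Qed.
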